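(* Let $\mathbf v\in\mathbb{R}^\infty$, and let $\mathbf y=\mathbb{F}^{\rm S}\mathbf v$ and $\mathbf z=\mathbb{L}^{\rm S}\mathbf v$, where $\mathbb{F}^{\rm S}=(1,x(1+x))$ and $\mathbb{L}^{\rm S}=(1+2x,x(1+x))$. Let $D=(1,-x)=\mathrm{diag}(1,-1,1,\ldots)$ and $C(x)=\frac{1-\sqrt{1-4x}}{2x}$. Then: (a) $\left(\frac{1}{1+2xC(x)},xC(x)\right)\mathbf z=D(\mathbb{F}^{\rm S})^{-1}D\,\mathbf y$; (b) $\left(\frac{1}{1-4x^2C(x)^2},xC(x)\right)\mathbf z=D(\mathbb{L}^{\rm S})^{-1}D\,\mathbf y$; (c) $\left(1+2xC(x),xC(x)\right)\mathbf y=D(\mathbb{F}^{\rm S})^{-1}D\,\mathbf z$; (d) $\left(\frac{1+2xC(x)}{1-2xC(x)},xC(x)\right)\mathbf y=D(\mathbb{L}^{\rm S})^{-1}D\,\mathbf z$.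
   Context: $\mathbb{R}^\infty$ is the space of real column vectors $[v_0,v_1,\ldots]^T$, identified with generating functions. For formal power series $g(x)$ with $g(0)\neq 0$ and $f(x)$ with $f(0)=0$, $f'(0)\ne0$, $(g(x),f(x))$ denotes the (Riordan) infinite lower triangular matrix whose $j$-th column has generating function $g(x)f(x)^j$; it maps a vector with generating function $U(x)$ to one with generating function $g(x)U(f(x))$. These matrices form a group with $(g,f)(h,l)=(g\cdot h(f),l(f))$ and $(g,f)^{-1}=(1/g(\bar f),\bar f)$, $\bar f$ the compositional inverse of $f$. *)

(* Formal power series over a real field R are represented
   by their coefficient sequences  nat -> R  (= column vectors of R^infty). *)
From Stdlib Require Import ClassicalEpsilon.
From mathcomp Require Import all_boot all_order all_algebra.
From mathcomp Require Import reals.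
Set Implicit Arguments. Unset Strict Implicit. Unset Printing Implicit Defensive.
Import Order.TTheory GRing.Theory Num.Theory.
Local Open Scope ring_scope.

Section FPS.
Variable R : realType.

Definition fps := nat -> R.

Definition fadd (f g : fps) : fps := fun n => f n + g n.
Definition fopp (f : fps) : fps := fun n => - f n.
Definition fscale (c : R) (f : fps) : fps := fun n => c * f n.
Definition fmul (f g : fps) : fps := fun n => \sum_(k < n.+1) f k * g (n - k)%N.
Definition fone : fps := fun n => (n == 0%N)%:R.
Definition fX : fps := fun n => (n == 1%N)%:R.
Definition fexp (f : fps) (k : nat) : fps := iter k (fmul f) fone.
(* composition v(f(x)), meaningful for f(0) = 0 *)
Definition fcomp (v f : fps) : fps := fun n => \sum_(k < n.+1) v k * fexp f k n.
(* division by x of a series with zero constant term *)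
Definition fdivX (f : fps) : fps := fun n => f n.+1.

(* multiplicative inverse 1/g (for g(0) <> 0), the unique h with g h = 1 *)
Definition fpinv (g : fps) : fps :=
  epsilon (inhabits fone) (fun h => fmul g h = fone).
(* compositional inverse fbar (for f(0)=0, f'(0)<>0): the unique h with
   h(0) = 0 and f(h(x)) = x *)
Definition frev (f : fps) : fps :=
  epsilon (inhabits fone) (fun h => h 0%N = 0 /\ fcomp f h = fX).
(* square root with constant term 1 (for p(0) = 1) *)
Definition fsqrt (p : fps) : fps :=
  epsilon (inhabits fone) (fun h => h 0%N = 1 /\ fmul h h = p).

(* Riordan arrays (g, f) as pairs; action on vectors: U |-> g * U(f) *)
Definition riordan := (fps * fps)%type.
Definition rarr (g f : fps) : riordan := (g, f).
Definition rapp (A : riordan) (v : fps) : fps := fmul A.1 (fcomp v A.2).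
Definition rinv (A : riordan) : riordan :=
  (fpinv (fcomp A.1 (frev A.2)), frev A.2).

(* D = (1, -x) = diag(1,-1,1,...) *)
Definition Dmat : riordan := (fone, fopp fX).
Definition FS : riordan := (fone, fmul fX (fadd fone fX)).
Definition LS : riordan := (fadd fone (fscale 2 fX), fmul fX (fadd fone fX)).
(* C(x) = (1 - sqrt(1-4x)) / (2x) *)
Definition Ccat : fps :=
  fscale (1/2) (fdivX (fadd fone (fopp (fsqrt (fadd fone (fscale (-4) fX)))))).
Definition xC : fps := fmul fX Ccat.

End FPS.

From Stdlib Require Import ClassicalEpsilon FunctionalExtensionality Ring.
From mathcomp Require Import all_boot all_order all_algebra.
From mathcomp Require Import reals.
From mathcomp Require Import zify.
Set Implicit Arguments. Unset Strict Implicit. Unset Printing Implicit Defensive.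
Import Order.TTheory GRing.Theory Num.Theory.
Local Open Scope ring_scope.

(* With P = x(1+x), N = -x and c = xC(x), the two facts behind all four
   identities are c^2 = c - x, i.e. P(-c) = -x, and its consequence
   Pbar(-x) = -c for the compositional inverse Pbar of P.  Conjugating by
   D = (1,-x) gives D (g,f) D = (g(-x), -f(-x)), hence
   D (g,P)^{-1} D = (1/g(-c), c); each of (a)-(d) then reduces to an identity
   between 1 + 2c, 1 - 2c and 1 - 4c^2 in the ring of power series. *)

Section PowerSeries.
Variable R : realType.
Implicit Types (a b f g h v w : fps R) (p q : {poly R}).

Definition agree (N : nat) a p := forall n, (n <= N)%N -> a n = p`_n.

Definition trunc N a : {poly R} := \poly_(i < N.+1) a i.

Lemma agree_trunc N a : agree N a (trunc N a).
Proof. by move=> n hn; rewrite coef_poly ltnS hn. Qed.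

Lemma agree_add N a b p q : agree N a p -> agree N b q -> agree N (fadd a b) (p + q).
Proof. by move=> ha hb n hn; rewrite coefD /fadd ha ?hb. Qed.

Lemma agree_opp N a p : agree N a p -> agree N (fopp a) (- p).
Proof. by move=> ha n hn; rewrite coefN /fopp ha. Qed.

Lemma agree_scale N k a p : agree N a p -> agree N (fscale k a) (k *: p).
Proof. by move=> ha n hn; rewrite coefZ /fscale ha. Qed.

Lemma agree_one N : agree N (fone R) 1.
Proof. by move=> n _; rewrite coef1 /fone. Qed.

Lemma agree_X N : agree N (fX R) 'X.
Proof. by move=> n _; rewrite coefX /fX. Qed.

Lemma agree_mul N a b p q : agree N a p -> agree N b q -> agree N (fmul a b) (p * q).
Proof.
move=> ha hb n hn; rewrite coefM /fmul; apply: eq_bigr => k _.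
have hk := ltn_ord k.
rewrite (ha k) ?(hb (n - k)%N) //; lia.
Qed.

Lemma fexpS f k : fexp f k.+1 = fmul f (fexp f k).
Proof. by rewrite /fexp iterS. Qed.

Lemma agree_exp N f p k : agree N f p -> agree N (fexp f k) (p ^+ k).
Proof.
move=> hf; elim: k => [|k IH]; first exact: agree_one.
by rewrite fexpS exprS; apply: agree_mul.
Qed.

Lemma fexp_small f k n : f 0%N = 0 -> (n < k)%N -> fexp f k n = 0.
Proof.
move=> f0; elim: k n => [//|k IH] n hn.
rewrite fexpS /fmul big1 // => j _.
have [->|jp] := posnP j; first by rewrite f0 mul0r.
rewrite IH ?mulr0 //; have := ltn_ord j; lia.
Qed.

(* Only the terms k <= n of [fcomp] contribute to the n-th coefficient, and
   both sums may be extended to [maxn (size p) n.+1] terms. *)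
Lemma agree_comp N v f p q : agree N v p -> agree N f q -> f 0%N = 0 ->
  agree N (fcomp v f) (p \Po q).
Proof.
move=> hv hf f0 n hn; rewrite coef_comp_poly /fcomp.
pose M := maxn (size p) n.+1.
rewrite (big_ord_widen M (fun k => v k * fexp f k n)) ?leq_maxr // big_mkcond /=.
rewrite (big_ord_widen M (fun k => p`_k * (q ^+ k)`_n)) ?leq_maxl // [RHS]big_mkcond /=.
apply: eq_bigr => k _; rewrite -(agree_exp k hf hn).
have hkN : (k < n.+1)%N -> (k <= N)%N by move=> hk; apply: leq_trans hn.
case: ifP => hk; case: ifP => hkp //.
- by rewrite hv // hkN.
- by rewrite hv ?hkN // nth_default ?mul0r // leqNgt hkp.
- by rewrite fexp_small ?mulr0 // ltnNge -ltnS hk.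
Qed.

Lemma fps_ext a b : (forall N, exists p q, [/\ agree N a p, agree N b q & p = q]) -> a = b.
Proof.
move=> H; apply: functional_extensionality => n.
by have [p [q [/(_ n (leqnn n)) -> /(_ n (leqnn n)) -> ->]]] := H n.
Qed.

Lemma fmul_at0 a b : fmul a b 0%N = a 0%N * b 0%N.
Proof. by rewrite /fmul big_ord1. Qed.

Lemma fcomp_at0 a f : fcomp a f 0%N = a 0%N.
Proof. by rewrite /fcomp big_ord1 /= /fone mulr1. Qed.

(* Identities of power series are checked on all truncations, where they
   become identities of polynomials. *)
Ltac agree_poly := repeat first
  [ apply: agree_add | apply: agree_opp | apply: agree_scale | apply: agree_mul
  | apply: agree_comp | apply: agree_one | apply: agree_X | apply: agree_trunc ].

Ltac fps_poly := apply: fps_ext => N; do 2 eexists;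
  split; [agree_poly | agree_poly | ]; try by rewrite ?fcomp_at0.

Definition fzero : fps R := fun _ => 0.
Definition fsub a b := fadd a (fopp b).

Lemma fmulC a b : fmul a b = fmul b a.
Proof. by fps_poly; rewrite mulrC. Qed.

Lemma fmulA a b h : fmul a (fmul b h) = fmul (fmul a b) h.
Proof. by fps_poly; rewrite mulrA. Qed.

Lemma fmul1 a : fmul (fone R) a = a.
Proof. by fps_poly; rewrite mul1r. Qed.

Lemma fmulDl a b h : fmul (fadd a b) h = fadd (fmul a h) (fmul b h).
Proof. by fps_poly; rewrite mulrDl. Qed.

Lemma fps_ring : ring_theory fzero (fone R) (@fadd R) (@fmul R) fsub (@fopp R) eq.
Proof.
split=> [a|a b|a b h||||||a].
- by apply: functional_extensionality => n; rewrite /fadd add0r.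
- by apply: functional_extensionality => n; rewrite /fadd addrC.
- by apply: functional_extensionality => n; rewrite /fadd addrA.
- exact: fmul1.
- exact: fmulC.
- exact: fmulA.
- exact: fmulDl.
- by [].
- by apply: functional_extensionality => n; rewrite /fadd /fopp subrr.
Qed.

Add Ring fps_ring : fps_ring.

Lemma fscaleNr k a : fscale (- k) a = fopp (fscale k a).
Proof. by apply: functional_extensionality => n; rewrite /fscale /fopp mulNr. Qed.

Lemma fscalerN k a : fscale k (fopp a) = fopp (fscale k a).
Proof. by apply: functional_extensionality => n; rewrite /fscale /fopp mulrN. Qed.

Lemma fmulZZ k l a b : fmul (fscale k a) (fscale l b) = fscale (k * l) (fmul a b).
Proof. by fps_poly; rewrite -scalerAl -scalerAr scalerA. Qed.

Lemma fdivXK w : w 0%N = 0 -> fmul (fX R) (fdivX w) = w.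
Proof.
move=> w0; apply: functional_extensionality => [[|m]].
  by rewrite fmul_at0 /fX mul0r w0.
rewrite /fmul big_ord_recl big_ord_recl big1 => [|i _]; last by rewrite /fX mul0r.
by rewrite /fX /= mul0r add0r mul1r addr0 /fdivX subn1.
Qed.

Section Composition.
Variable f : fps R.
Hypothesis f0 : f 0%N = 0.

Lemma fcompD a b : fcomp (fadd a b) f = fadd (fcomp a f) (fcomp b f).
Proof. by fps_poly; rewrite comp_polyD. Qed.

Lemma fcompN a : fcomp (fopp a) f = fopp (fcomp a f).
Proof. by fps_poly; rewrite raddfN. Qed.

Lemma fcompZ k a : fcomp (fscale k a) f = fscale k (fcomp a f).
Proof. by fps_poly; rewrite comp_polyZ. Qed.

Lemma fcompM a b : fcomp (fmul a b) f = fmul (fcomp a f) (fcomp b f).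
Proof. by fps_poly; rewrite comp_polyM. Qed.

Lemma fcomp1 : fcomp (fone R) f = fone R.
Proof. by fps_poly; rewrite -polyC1 comp_polyC. Qed.

Lemma fcompX : fcomp (fX R) f = f.
Proof. by fps_poly; rewrite comp_polyX. Qed.

Lemma fcompA a g : g 0%N = 0 -> fcomp (fcomp a f) g = fcomp a (fcomp f g).
Proof. by move=> g0; fps_poly; rewrite ?fcomp_at0 // comp_polyA. Qed.

End Composition.

Lemma exists_strong_rec (F : nat -> fps R -> R) :
  (forall n a b, (forall k, (k < n)%N -> a k = b k) -> F n a = F n b) ->
  exists a, forall n, a n = F n a.
Proof.
move=> F_causal.
pose A m := iter m (fun a n => F n a) fzero.
have A_stable k m : (k < m)%N -> A m k = A k.+1 k.
  elim/ltn_ind: k m => k IH [//|m] km.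
  rewrite /A !iterS /= -/(A m) -/(A k); apply: F_causal => j jk.
  rewrite (IH j jk m) ?(IH j jk k) //; lia.
exists (fun n => A n.+1 n) => n.
rewrite /A iterS /= -/(A n); apply: F_causal => k kn; exact: A_stable.
Qed.

Lemma exists_fmul_inv g : g 0%N != 0 -> exists h, fmul g h = fone R.
Proof.
move=> g0.
pose F n a := if n is m.+1 then - (g 0%N)^-1 * \sum_(k < m.+1) g k.+1 * a (m - k)%N
  else (g 0%N)^-1.
have [h hh] : exists h, forall n, h n = F n h.
  apply: exists_strong_rec => [[|m]] a b ab //=; congr (_ * _).
  apply: eq_bigr => k _; rewrite ab //; have := ltn_ord k; lia.
exists h; apply: functional_extensionality => [[|m]].
  by rewrite fmul_at0 hh /= divff.
rewrite /fmul big_ord_recl /= subn0 hh /= mulrA mulrN divff // mulN1r /fone /=.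
apply/eqP; rewrite addrC subr_eq0; apply/eqP.
by apply: eq_bigr => k _; rewrite /bump /= add1n subSS.
Qed.

Lemma fpinvP g : g 0%N != 0 -> fmul g (fpinv g) = fone R.
Proof.
move=> /exists_fmul_inv [h gh].
exact: (epsilon_spec (inhabits (fone R)) (fun h => fmul g h = fone R) (ex_intro _ h gh)).
Qed.

Lemma fpinv_eq g h : g 0%N != 0 -> fmul g h = fone R -> fpinv g = h.
Proof.
move=> g0 gh.
have -> : fpinv g = fmul (fpinv g) (fmul g h) by rewrite gh; ring.
by rewrite fmulA (fmulC _ g) fpinvP // fmul1.
Qed.

Lemma fpinv1 : fpinv (fone R) = fone R.
Proof. by apply: fpinv_eq; rewrite ?fmul1 // /fone oner_eq0. Qed.

Lemma fcomp_fpinv g f : g 0%N != 0 -> f 0%N = 0 -> fcomp (fpinv g) f = fpinv (fcomp g f).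
Proof.
move=> g0 f0; symmetry; apply: fpinv_eq; first by rewrite fcomp_at0.
by rewrite -fcompM // fpinvP // fcomp1.
Qed.

Lemma fadd1_unit a : a 0%N = 0 -> fadd (fone R) a 0%N != 0.
Proof. by move=> a0; rewrite /fadd a0 addr0 oner_eq0. Qed.

Lemma fadd1N_unit a : a 0%N = 0 -> fadd (fone R) (fopp a) 0%N != 0.
Proof. by move=> a0; rewrite fadd1_unit // /fopp a0 oppr0. Qed.

Lemma fpinv_1subN d : d 0%N = 0 ->
  fpinv (fadd (fone R) (fopp d))
    = fmul (fadd (fone R) d) (fpinv (fadd (fone R) (fopp (fmul d d)))).
Proof.
move=> d0; apply: fpinv_eq; first exact: fadd1N_unit.
have dd0 : fmul d d 0%N = 0 by rewrite fmul_at0 d0 mul0r.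
by rewrite fmulA -[RHS](fpinvP (fadd1N_unit dd0)); ring.
Qed.

Lemma fsub_eq0 h g : fsub h g = fzero -> h = g.
Proof.
move=> hg; have -> : h = fadd (fsub h g) g by ring.
by rewrite hg; ring.
Qed.

Lemma fmul_unit_eq0 a b : a 0%N != 0 -> fmul a b = fzero -> b = fzero.
Proof.
move=> a0 ab0.
have -> : b = fmul (fmul a (fpinv a)) b by rewrite fpinvP // fmul1.
by rewrite -fmulA (fmulC _ b) fmulA ab0; ring.
Qed.

Lemma fsqr_inj a b : a 0%N + b 0%N != 0 -> fmul a a = fmul b b -> a = b.
Proof.
move=> ab0 aabb; apply: fsub_eq0; apply: (@fmul_unit_eq0 (fadd a b)) => //.
have -> : fmul (fadd a b) (fsub a b) = fsub (fmul a a) (fmul b b) by ring.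
by rewrite aabb; ring.
Qed.

(* The recursion is the Catalan one: u_n = [n = 1] + sum_(0 < k < n) u_k u_(n-k). *)
Lemma exists_catalan_root : exists u, u 0%N = 0 /\ fmul u u = fsub u (fX R).
Proof.
pose F n a := (n == 1%N)%:R + \sum_(k < n.+1) (if (0 < k < n)%N then a k * a (n - k)%N else 0).
have [u uF] : exists u, forall n, u n = F n u.
  apply: exists_strong_rec => n a b ab; congr (_ + _); apply: eq_bigr => k _.
  by case: ifP => // /andP[k0 kn]; rewrite !ab //; lia.
have u0 : u 0%N = 0 by rewrite uF /F big_ord1 /= addr0.
exists u; split => //; apply: functional_extensionality => n.
rewrite /fsub /fadd /fopp /fX uF /F addrC addrA addNr add0r /fmul.
apply: eq_bigr => k _; case: ifP => // /negbT.
have := ltn_ord k; rewrite negb_and -!leqNgt ltnS => kn /orP[|nk].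
  by rewrite leqn0 => /eqP ->; rewrite u0 mul0r.
have -> : (n - k)%N = 0%N by lia.
by rewrite u0 mulr0.
Qed.

Lemma fscaleN4X : fscale (-4) (fX R) = fopp (fadd (fX R) (fadd (fX R) (fadd (fX R) (fX R)))).
Proof.
apply: functional_extensionality => n.
by rewrite /fscale /fopp /fadd mulNr mulr_natl !mulrS mulr0n addr0.
Qed.

Lemma xC_root : xC R 0%N = 0 /\ fmul (xC R) (xC R) = fsub (xC R) (fX R).
Proof.
have [u [u0 uu]] := exists_catalan_root.
pose s := fsub (fone R) (fadd u u).
have s0 : s 0%N = 1 by rewrite /s /fsub /fadd /fopp u0 addr0 oppr0 addr0.
have ss : fmul s s = fadd (fone R) (fscale (-4) (fX R)) by rewrite fscaleN4X /s; ring [uu].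
have sqrt_s : fsqrt (fadd (fone R) (fscale (-4) (fX R))) = s.
  set p := fadd _ _ in ss *.
  have [h0 hh] : fsqrt p 0%N = 1 /\ fmul (fsqrt p) (fsqrt p) = p :=
    epsilon_spec (inhabits (fone R)) (fun h => h 0%N = 1 /\ fmul h h = p)
      (ex_intro _ s (conj s0 ss)).
  apply: fsqr_inj; first by rewrite h0 s0 -mulr2n pnatr_eq0.
  by rewrite hh ss.
have -> : xC R = u.
  rewrite /xC /Ccat sqrt_s.
  have -> : fadd (fone R) (fopp s) = fadd u u by rewrite /s; ring.
  rewrite -[RHS]fdivXK //; congr fmul; apply: functional_extensionality => n.
  by rewrite /fscale /fdivX /fadd mulrDr -mulrDl -splitr mul1r.
by [].
Qed.

Local Notation P := (fmul (fX R) (fadd (fone R) (fX R))).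
Local Notation N := (fopp (fX R)).

Lemma N_at0 : N 0%N = 0.
Proof. by rewrite /fopp oppr0. Qed.

Lemma fcomp_P h : h 0%N = 0 -> fcomp P h = fmul h (fadd (fone R) h).
Proof. by move=> h0; rewrite fcompM // fcompD // fcomp1 // fcompX. Qed.

Lemma P_inj h g : h 0%N = 0 -> g 0%N = 0 -> fcomp P h = fcomp P g -> h = g.
Proof.
move=> h0 g0; rewrite !fcomp_P // => Phg.
apply: fsub_eq0; apply: (@fmul_unit_eq0 (fadd (fone R) (fadd h g))).
  by rewrite fadd1_unit // /fadd h0 g0 addr0.
have -> : fmul (fadd (fone R) (fadd h g)) (fsub h g)
  = fsub (fmul h (fadd (fone R) h)) (fmul g (fadd (fone R) g)) by ring.
by rewrite Phg; ring.
Qed.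

Lemma fcomp_P_oppxC : fcomp P (fopp (xC R)) = N.
Proof.
have [c0 cc] := xC_root.
by rewrite fcomp_P; [ring [cc] | rewrite /fopp c0 oppr0].
Qed.

Lemma frev_P : frev P 0%N = 0 /\ fcomp P (frev P) = fX R.
Proof.
have c0 : fopp (xC R) 0%N = 0 by rewrite /fopp (xC_root).1 oppr0.
apply: (epsilon_spec (inhabits (fone R)) (fun h => h 0%N = 0 /\ fcomp P h = fX R)).
exists (fcomp (fopp (xC R)) N); split; first by rewrite fcomp_at0.
rewrite -fcompA ?N_at0 // fcomp_P_oppxC fcompN ?N_at0 // fcompX ?N_at0 //; ring.
Qed.

Lemma frev_P_N : fcomp (frev P) N = fopp (xC R).
Proof.
have [t0 Pt] := frev_P; have [c0 _] := xC_root.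
apply: P_inj; [by rewrite fcomp_at0 | by rewrite /fopp c0 oppr0 | ].
by rewrite -fcompA ?N_at0 // Pt fcompX ?N_at0 // fcomp_P_oppxC.
Qed.

Lemma Dmat_conj g f w : f 0%N = 0 ->
  rapp (Dmat R) (rapp (rarr g f) (rapp (Dmat R) w))
    = rapp (rarr (fcomp g N) (fcomp (fopp f) N)) w.
Proof.
move=> f0; rewrite /rapp /= !fmul1 fcompM ?N_at0 //.
have fN_at0 : fcomp f N 0%N = 0 by rewrite fcomp_at0.
by rewrite !fcompA ?N_at0 // fcompN // fcompX // fcompN ?N_at0.
Qed.

Lemma Dmat_rinv_P_conj g w : g 0%N != 0 ->
  rapp (Dmat R) (rapp (rinv (rarr g P)) (rapp (Dmat R) w))
    = fmul (fpinv (fcomp g (fopp (xC R)))) (fcomp w (xC R)).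
Proof.
have [t0 _] := frev_P.
move=> g0; rewrite Dmat_conj // /rapp /= fcomp_fpinv ?fcomp_at0 ?N_at0 //.
by rewrite fcompA ?N_at0 // frev_P_N fcompN ?N_at0 // frev_P_N; congr (fmul _ (fcomp w _)); ring.
Qed.

Lemma fcomp_LS_FS v c : c 0%N = 0 ->
  fcomp (rapp (LS R) v) c = fmul (fadd (fone R) (fscale 2 c)) (fcomp (rapp (FS R) v) c).
Proof. by move=> c0; rewrite /rapp /= fmul1 fcompM // fcompD // fcomp1 // fcompZ // fcompX. Qed.

End PowerSeries.

Theorem theorem4p5 (R : realType) (v : fps R) :
  let y := rapp (FS R) v in
  let z := rapp (LS R) v in
  let xc := xC R in
  (* (a) *)
  rapp (rarr (fpinv (fadd (fone R) (fscale 2 xc))) xc) z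
    = rapp (Dmat R) (rapp (rinv (FS R)) (rapp (Dmat R) y)) /\
  (* (b) *)
  rapp (rarr (fpinv (fadd (fone R) (fscale (-4) (fmul xc xc)))) xc) z
    = rapp (Dmat R) (rapp (rinv (LS R)) (rapp (Dmat R) y)) /\
  (* (c) *)
  rapp (rarr (fadd (fone R) (fscale 2 xc)) xc) y
    = rapp (Dmat R) (rapp (rinv (FS R)) (rapp (Dmat R) z)) /\
  (* (d) *)
  rapp (rarr (fmul (fadd (fone R) (fscale 2 xc))
             (fpinv (fadd (fone R) (fscale (-2) xc)))) xc) y
    = rapp (Dmat R) (rapp (rinv (LS R)) (rapp (Dmat R) z)).
Proof.
move=> y z c.
have [c0 _] : c 0%N = 0 /\ _ := xC_root R.
have one0 : fone R 0%N != 0 by rewrite /fone oner_eq0.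
have LS0 : fadd (fone R) (fscale 2 (fX R)) 0%N != 0 by rewrite fadd1_unit // /fscale mulr0.
rewrite !Dmat_rinv_P_conj // -/c /rapp /rarr /=.
have oppc0 : fopp c 0%N = 0 by rewrite /fopp c0 oppr0.
rewrite fcomp1 // fpinv1 fcompD // fcomp1 // fcompZ // fcompX // fscalerN.
have -> : fscale (-4) (fmul c c) = fopp (fmul (fscale 2 c) (fscale 2 c)).
  by rewrite fmulZZ -natrM fscaleNr.
rewrite fscaleNr; set d := fscale 2 c.
have d0 : d 0%N = 0 by rewrite /d /fscale c0 mulr0.
have Ez : fcomp z c = fmul (fadd (fone R) d) (fcomp y c) by exact: fcomp_LS_FS.
rewrite Ez !fmul1; split; [|split; [|split]] => //.
- by rewrite fmulA (fmulC (fpinv _)) fpinvP ?fmul1 ?fadd1_unit.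
- by rewrite (fpinv_1subN d0) fmulA (fmulC (fadd _ d)).
- by rewrite fmulA (fmulC (fpinv _)).
Qed.
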